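(* Let $\mathcal{R}=\{z\in\mathbb{C}:\Re(z)>0\}$ and let $\Phi:\mathcal{R}\to\mathbb{C}$ be analytic and satisfy: (a) for all $0<a<b<\infty$, $\lim_{y\to\pm\infty} e^{-\pi|y|}\int_a^b\left|\frac{\Phi(x+iy)}{x+iy}\right|\mathrm{d}x=0$; (b) for every $\eta>0$, $\sup_{x\ge\eta}\int_{-\infty}^\infty\left|\frac{\Phi(x+iy)}{x+iy}\right|e^{-\pi|y|}\,\mathrm{d}y<\infty$; (c) $\lim_{x\to\infty}\int_{-\infty}^\infty\left|\frac{\Phi(x+iy)}{x+iy}\right|e^{-\pi|y|}\,\mathrm{d}y=0$. Let $\delta>0$. Then there exists $c(\delta,\Phi)>0$, depending only on $\delta$ and $\Phi$, such that $|\Phi(z)|\le c(\delta,\Phi)|z|e^{\pi|y|}$ for all $z=x+iy$ with $\Re(z)\ge\delta$. *)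

From Stdlib Require Import Reals.
From Coquelicot Require Import Coquelicot.
Open Scope R_scope.

Definition analytic_right_half_plane (Phi : C -> C) : Prop :=
  forall z : C, 0 < Re z -> @ex_derive C_AbsRing C_NormedModule Phi z.

Definition absratio (Phi : C -> C) (x y : R) : R :=
  Cmod (Phi (x, y) / (x, y))%C.

Definition cond_a (Phi : C -> C) : Prop :=
  forall a b : R, 0 < a -> a < b ->
    is_lim (fun y => exp (- PI * Rabs y) * RInt (fun x => absratio Phi x y) a b)
           p_infty 0 /\
    is_lim (fun y => exp (- PI * Rabs y) * RInt (fun x => absratio Phi x y) a b)
           m_infty 0.

Definition line_integral (Phi : C -> C) (x l : R) : Prop :=
  is_RInt_gen (fun y => absratio Phi x y * exp (- PI * Rabs y))
              (Rbar_locally m_infty) (Rbar_locally p_infty) l.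

Definition cond_b (Phi : C -> C) : Prop :=
  forall eta : R, 0 < eta ->
    exists M : R, forall x : R, eta <= x ->
      exists l : R, line_integral Phi x l /\ l <= M.

Definition cond_c (Phi : C -> C) : Prop :=
  forall eps : R, 0 < eps ->
    exists X : R, forall x : R, X <= x ->
      exists l : R, line_integral Phi x l /\ l <= eps.

From Stdlib Require Import Reals Lra FunctionalExtensionality.
From Coquelicot Require Import Coquelicot.
Open Scope R_scope.

(* Fix z = x + iy with x >= delta, put s = delta / 2 and F(w) = Phi(w)/w * exp((w - z)^2).  For
   w = u + iv we have |exp((w - z)^2)| = exp((u - x)^2 - (v - y)^2).  On the vertical sides of the
   rectangle [x - s, x + s] x [y - T, y + T] this factor is at most e^{s^2 + pi^2/4} e^{pi|y|} e^{-pi|v|},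
   so their contribution to the boundary integral of F(w)/(w - z) is controlled by condition (b); on
   the horizontal sides it is e^{s^2 - T^2}, which beats the growth allowed by condition (a) for large T.
   The Cauchy-type estimate 4|F(z)| <= |int F(w)/(w - z) dw| over the boundary follows from Goursat's
   theorem (by quadrisection) and the elementary bound |int dw/(w - z)| >= 4 over small squares centred
   at z.  This gives |Phi(z)/z| <= c e^{pi|y|}. *)

Lemma Rabs_fst_le_Cmod (z : C) : Rabs (fst z) <= Cmod z.
Proof. pose proof (Rmax_Cmod z); pose proof (Rmax_l (Rabs (fst z)) (Rabs (snd z))); lra. Qed.

Lemma Rabs_snd_le_Cmod (z : C) : Rabs (snd z) <= Cmod z.
Proof. pose proof (Rmax_Cmod z); pose proof (Rmax_r (Rabs (fst z)) (Rabs (snd z))); lra. Qed.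

Lemma Cmod_le_Rabs_fst_snd (z : C) : Cmod z <= Rabs (fst z) + Rabs (snd z).
Proof.
  destruct z as [x y]; unfold Cmod; simpl.
  pose proof (Rabs_pos x); pose proof (Rabs_pos y).
  rewrite <- (sqrt_Rsqr (Rabs x + Rabs y)) by lra.
  apply sqrt_le_1_alt; pose proof (Rsqr_abs x); pose proof (Rsqr_abs y); unfold Rsqr in *; nra.
Qed.

Lemma Cmod_sub_le_Rabs_fst_snd (u w : C) :
  Cmod (u - w) <= Rabs (fst u - fst w) + Rabs (snd u - snd w).
Proof. exact (Cmod_le_Rabs_fst_snd (u - w)). Qed.

Lemma Cmod_sub_rev (u w : C) : Cmod (u - w) = Cmod (w - u).
Proof. replace (u - w)%C with (- (w - u))%C by ring; apply Cmod_opp. Qed.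

Lemma Rabs_Cmod_sub_le (u w : C) : Rabs (Cmod u - Cmod w) <= Cmod (u - w).
Proof.
  pose proof (Cmod_triangle (u - w) w); pose proof (Cmod_triangle (w - u) u).
  replace (u - w + w)%C with u in * by ring; replace (w - u + u)%C with w in * by ring.
  rewrite (Cmod_sub_rev w u) in *; apply Rabs_le; lra.
Qed.

(** * Complex differentiability *)

Definition Ccontinuous_at (g : C -> C) (w : C) : Prop :=
  forall eps, 0 < eps -> exists del, 0 < del /\
    forall w', Cmod (w' - w) < del -> Cmod (g w' - g w) < eps.

Notation ex_derive_C := (ex_derive (K := C_AbsRing) (V := C_NormedModule)).
Notation is_derive_C := (is_derive (K := C_AbsRing) (V := C_NormedModule)).

Lemma ex_derive_C_Ccontinuous_at (g : C -> C) (w : C) :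
  ex_derive_C g w -> Ccontinuous_at g w.
Proof.
  intros H%ex_derive_continuous eps Heps.
  assert (Heps2 : 0 < eps / 2) by lra.
  destruct (proj1 (filterlim_locally (T := AbsRing_UniformSpace C_AbsRing) (U := C_NormedModule)
    (F := @locally (AbsRing_UniformSpace C_AbsRing) w) g (g w)) H (mkposreal _ Heps2)) as [del Hdel].
  exists (pos del); split; [apply cond_pos|].
  intros w' Hw'; destruct (Hdel w' Hw') as [H1 H2].
  change (Rabs (fst (g w') - fst (g w)) < eps / 2) in H1.
  change (Rabs (snd (g w') - snd (g w)) < eps / 2) in H2.
  pose proof (Cmod_sub_le_Rabs_fst_snd (g w') (g w)); lra.
Qed.

Lemma ex_derive_C_linear_approx (g : C -> C) (w0 : C) : ex_derive_C g w0 ->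
  exists l : C, forall eps, 0 < eps -> exists rho, 0 < rho /\ forall w,
    Cmod (w - w0) < rho -> Cmod (g w - g w0 - l * (w - w0)) <= eps * Cmod (w - w0).
Proof.
  intros [l [_ Hl]]; exists l; intros eps Heps.
  destruct (Hl w0 (fun P H => H) (mkposreal eps Heps)) as [rho Hrho].
  exists (pos rho); split; [apply cond_pos|]; intros w Hw.
  specialize (Hrho w Hw); simpl in Hrho.
  change (Cmod (g w - g w0 - (w - w0) * l) <= eps * Cmod (w - w0)) in Hrho.
  rewrite Cmult_comm; exact Hrho.
Qed.

Lemma is_derive_C_intro (f : C -> C) (w0 l : C) :
  (forall eps, 0 < eps -> exists rho, 0 < rho /\ forall w, Cmod (w - w0) < rho ->
     Cmod (f w - f w0 - l * (w - w0)) <= eps * Cmod (w - w0)) -> is_derive_C f w0 l.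
Proof.
  intros H; split; [apply is_linear_scal_l|].
  intros w Hw.
  apply (is_filter_lim_locally_unique (K := C_AbsRing) (V := AbsRing_NormedModule C_AbsRing)) in Hw.
  subst w; intros eps; destruct (H eps (cond_pos eps)) as [rho [Hrho Hf]].
  exists (mkposreal rho Hrho); intros w Hw; specialize (Hf w Hw).
  change (Cmod (f w - f w0 - (w - w0) * l) <= eps * Cmod (w - w0)).
  rewrite Cmult_comm; exact Hf.
Qed.

(* Coquelicot's derivative rules are stated over [AbsRing_NormedModule C_AbsRing], which carries
   the same norm as [C_NormedModule] but is a different structure. *)
Notation is_derive_CA := (is_derive (K := C_AbsRing) (V := AbsRing_NormedModule C_AbsRing)).

Lemma is_derive_C_of_CA (f : C -> C) w l : is_derive_CA f w l -> is_derive_C f w l.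
Proof. intros [_ H]; split; [apply is_linear_scal_l|]; intros u Hu eps; exact (H u Hu eps). Qed.

Lemma is_derive_CA_of_C (f : C -> C) w l : is_derive_C f w l -> is_derive_CA f w l.
Proof. intros [_ H]; split; [apply is_linear_scal_l|]; intros u Hu eps; exact (H u Hu eps). Qed.

Lemma ex_derive_C_id (w : C) : ex_derive_C (fun u => u) w.
Proof. eexists; apply is_derive_C_of_CA, is_derive_id. Qed.

Lemma ex_derive_C_const (c w : C) : ex_derive_C (fun _ => c) w.
Proof. eexists; apply is_derive_C_of_CA, (is_derive_const (K := C_AbsRing)). Qed.

Lemma ex_derive_C_minus (f g : C -> C) w :
  ex_derive_C f w -> ex_derive_C g w -> ex_derive_C (fun u => f u - g u)%C w.
Proof. intros [l1 H1] [l2 H2]; eexists; exact (is_derive_minus f g w l1 l2 H1 H2). Qed.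

Lemma ex_derive_C_mult (f g : C -> C) w :
  ex_derive_C f w -> ex_derive_C g w -> ex_derive_C (fun u => f u * g u)%C w.
Proof.
  intros [l1 H1] [l2 H2]; eexists; apply is_derive_C_of_CA.
  exact (is_derive_mult f g w l1 l2 (is_derive_CA_of_C _ _ _ H1) (is_derive_CA_of_C _ _ _ H2) Cmult_comm).
Qed.

Lemma ex_derive_C_comp (f g : C -> C) w :
  ex_derive_C f (g w) -> ex_derive_C g w -> ex_derive_C (fun u => f (g u)) w.
Proof. intros H1 [l H2]; apply (ex_derive_comp f g w H1); exists l; exact (is_derive_CA_of_C _ _ _ H2). Qed.

Lemma is_derive_C_Cinv (w0 : C) : w0 <> 0%C -> is_derive_C Cinv w0 (- (/ w0 * / w0))%C.
Proof.
  intros Hw0; apply is_derive_C_intro; intros eps Heps.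
  set (m := Cmod w0); assert (Hm : 0 < m) by (apply Cmod_gt_0; auto).
  assert (Hm3 : 0 < m * m * m) by (repeat apply Rmult_lt_0_compat; lra).
  exists (Rmin (m / 2) (eps * (m * m * m) / 2)); split.
  { apply Rmin_pos; [lra | apply Rdiv_lt_0_compat; [apply Rmult_lt_0_compat|]; lra]. }
  intros w Hw.
  pose proof (Rmin_l (m / 2) (eps * (m * m * m) / 2)); pose proof (Rmin_r (m / 2) (eps * (m * m * m) / 2)).
  set (e := Cmod (w - w0)) in *; assert (0 <= e) by apply Cmod_ge_0.
  assert (Hwm : m / 2 <= Cmod w).
  { pose proof (Cmod_triangle (w0 - w) w) as Htri.
    replace (w0 - w + w)%C with w0 in Htri by ring; rewrite Cmod_sub_rev in Htri; fold e m in Htri; lra. }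
  assert (Hw0' : w <> 0%C) by (intros E; rewrite E, Cmod_0 in Hwm; lra).
  replace (/ w - / w0 - - (/ w0 * / w0) * (w - w0))%C with ((w - w0) * (w - w0) * / (w0 * w0 * w))%C
    by (field; split; auto).
  rewrite !Cmod_mult, Cmod_inv, !Cmod_mult by (repeat apply Cmult_neq_0; auto); fold m e.
  assert (0 < m * m * Cmod w) by (apply Rmult_lt_0_compat; nra).
  apply Rle_trans with (e * e * / (m * m * (m / 2))).
  { apply Rmult_le_compat_l; [nra|]; apply Rinv_le_contravar; nra. }
  apply Rmult_le_reg_r with (m * m * (m / 2)); [nra|].
  replace (e * e * / (m * m * (m / 2)) * (m * m * (m / 2))) with (e * e) by (field; lra).
  nra.
Qed.

Lemma ex_derive_C_Cinv (f : C -> C) w :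
  ex_derive_C f w -> f w <> 0%C -> ex_derive_C (fun u => / f u)%C w.
Proof. intros Hf Hnz; apply (ex_derive_C_comp Cinv f w); auto; eexists; apply is_derive_C_Cinv, Hnz. Qed.

Definition Cexp (w : C) : C := (exp (fst w) * cos (snd w), exp (fst w) * sin (snd w)).

Lemma Cexp_plus (w h : C) : Cexp (w + h)%C = (Cexp w * Cexp h)%C.
Proof.
  destruct w as [a b], h as [p q]; unfold Cexp, Cmult, Cplus; simpl.
  rewrite exp_plus, cos_plus, sin_plus; f_equal; ring.
Qed.

Lemma Cmod_Cexp (w : C) : Cmod (Cexp w) = exp (fst w).
Proof.
  destruct w as [a b]; unfold Cmod, Cexp; cbn [fst snd].
  replace ((exp a * cos b) ^ 2 + (exp a * sin b) ^ 2) with (exp a ^ 2)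
    by (pose proof (sin2_cos2 b); unfold Rsqr in *; nra).
  apply sqrt_pow2; left; apply exp_pos.
Qed.

Lemma derivable_pt_lim_0_approx f l : derivable_pt_lim f 0 l ->
  forall eps, 0 < eps -> exists del, 0 < del /\
    forall h, Rabs h < del -> Rabs (f h - f 0 - l * h) <= eps * Rabs h.
Proof.
  intros Hf eps Heps; destruct (Hf eps Heps) as [del Hdel].
  exists (pos del); split; [apply cond_pos|]; intros h Hh.
  destruct (Req_dec h 0) as [->|Hh0].
  - replace (f 0 - f 0 - l * 0) with 0 by ring; rewrite Rabs_R0; lra.
  - specialize (Hdel h Hh0 Hh); rewrite Rplus_0_l in Hdel.
    replace (f h - f 0 - l * h) with (((f h - f 0) / h - l) * h) by (field; auto).
    rewrite Rabs_mult; apply Rmult_le_compat_r; [apply Rabs_pos | lra].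
Qed.

Lemma Cmod_Cexp_sub_1_sub_le p q e : 0 < e <= 1 -> Cmod (p, q) < e ->
  Rabs (exp p - 1 - 1 * p) <= e * Rabs p -> Rabs (cos q - 1 - - 0 * q) <= e * Rabs q ->
  Rabs (sin q - 0 - 1 * q) <= e * Rabs q -> Cmod (Cexp (p, q) - 1 - (p, q))%C <= 9 * e * Cmod (p, q).
Proof.
  intros He Hpq Dexp Dcos Dsin.
  pose proof (Rabs_fst_le_Cmod (p, q)) as Hp; pose proof (Rabs_snd_le_Cmod (p, q)) as Hq.
  simpl in Hp, Hq; set (m := Cmod (p, q)) in *; assert (0 <= m) by apply Cmod_ge_0.
  pose proof (Rabs_pos p); pose proof (Rabs_pos q).
  assert (Hexp : exp p <= 3).
  { apply Rle_trans with (exp 1); [|apply exp_le_3].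
    assert (Hp1 : p <= 1) by (apply Rabs_le_between in Hp; lra).
    destruct (Rle_lt_or_eq_dec p 1 Hp1) as [Hlt | ->]; [left; apply exp_increasing, Hlt | lra]. }
  assert (0 < exp p) by apply exp_pos.
  eapply Rle_trans; [apply Cmod_le_Rabs_fst_snd|].
  unfold Cexp, Cminus, Cplus, Copp, RtoC; simpl.
  assert (Hre : Rabs (exp p * cos q + - (1) + - p) <= 4 * e * m).
  { replace (exp p * cos q + - (1) + - p) with ((exp p - 1 - 1 * p) + exp p * (cos q - 1 - - 0 * q)) by ring.
    eapply Rle_trans; [apply Rabs_triang|].
    rewrite Rabs_mult, (Rabs_right (exp p)) by lra.
    assert (exp p * Rabs (cos q - 1 - - 0 * q) <= 3 * (e * Rabs q))
      by (apply Rmult_le_compat; try lra; apply Rabs_pos).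
    nra. }
  assert (Him : Rabs (exp p * sin q + - 0 + - q) <= 5 * e * m).
  { replace (exp p * sin q + - 0 + - q) with ((exp p - 1) * sin q + (sin q - 0 - 1 * q)) by ring.
    eapply Rle_trans; [apply Rabs_triang|]; rewrite Rabs_mult.
    assert (Rabs (exp p - 1) <= 2 * m).
    { replace (exp p - 1) with ((exp p - 1 - 1 * p) + p) by ring; eapply Rle_trans; [apply Rabs_triang | nra]. }
    assert (Rabs (sin q) <= 2 * m).
    { replace (sin q) with ((sin q - 0 - 1 * q) + q) by ring; eapply Rle_trans; [apply Rabs_triang | nra]. }
    assert (Rabs (exp p - 1) * Rabs (sin q) <= (2 * m) * (2 * m)) by (apply Rmult_le_compat; try apply Rabs_pos; lra).
    nra. }
  nra.
Qed.

Lemma Cexp_sub_1_sub_small eps : 0 < eps -> exists rho, 0 < rho /\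
  forall h, Cmod h < rho -> Cmod (Cexp h - 1 - h)%C <= eps * Cmod h.
Proof.
  intros Heps; set (e := Rmin (eps / 9) 1).
  assert (He : 0 < e) by (apply Rmin_pos; lra).
  assert (He9 : e <= eps / 9) by apply Rmin_l.
  assert (He1 : e <= 1) by apply Rmin_r.
  destruct (derivable_pt_lim_0_approx exp 1 derivable_pt_lim_exp_0 e He) as [d1 [Hd1 D1]].
  destruct (derivable_pt_lim_0_approx cos (- sin 0) (derivable_pt_lim_cos 0) e He) as [d2 [Hd2 D2]].
  destruct (derivable_pt_lim_0_approx sin (cos 0) (derivable_pt_lim_sin 0) e He) as [d3 [Hd3 D3]].
  rewrite exp_0 in D1; rewrite sin_0, cos_0 in D2; rewrite cos_0, sin_0 in D3.
  exists (Rmin (Rmin d1 d2) (Rmin d3 e)); split; [repeat apply Rmin_pos; lra|].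
  intros [p q] Hpq.
  pose proof (Rabs_fst_le_Cmod (p, q)); pose proof (Rabs_snd_le_Cmod (p, q)); simpl in *.
  pose proof (Rmin_l (Rmin d1 d2) (Rmin d3 e)); pose proof (Rmin_r (Rmin d1 d2) (Rmin d3 e)).
  pose proof (Rmin_l d1 d2); pose proof (Rmin_r d1 d2); pose proof (Rmin_l d3 e); pose proof (Rmin_r d3 e).
  eapply Rle_trans; [apply (Cmod_Cexp_sub_1_sub_le p q e); try lra; [apply D1 | apply D2 | apply D3]; lra|].
  apply Rmult_le_compat_r; [apply Cmod_ge_0 | lra].
Qed.

Lemma is_derive_C_Cexp (w : C) : is_derive_C Cexp w (Cexp w).
Proof.
  apply is_derive_C_intro; intros eps Heps.
  set (M := Cmod (Cexp w)); assert (HM : 0 < M) by (unfold M; rewrite Cmod_Cexp; apply exp_pos).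
  destruct (Cexp_sub_1_sub_small (eps / M)) as [rho [Hrho Hsmall]]; [apply Rdiv_lt_0_compat; lra|].
  exists rho; split; [exact Hrho|]; intros u Hu.
  replace (Cexp u - Cexp w - Cexp w * (u - w))%C with (Cexp w * (Cexp (u - w) - 1 - (u - w)))%C.
  - rewrite Cmod_mult; fold M.
    apply Rle_trans with (M * (eps / M * Cmod (u - w))); [apply Rmult_le_compat_l; auto; lra|].
    right; field; lra.
  - replace (Cexp u) with (Cexp w * Cexp (u - w))%C by (rewrite <- Cexp_plus; f_equal; ring); ring.
Qed.

Lemma ex_derive_C_Cexp (f : C -> C) w : ex_derive_C f w -> ex_derive_C (fun u => Cexp (f u)) w.
Proof. intros Hf; apply ex_derive_C_comp; auto; eexists; apply is_derive_C_Cexp. Qed.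

(** * Integrals along segments and rectangle boundaries *)

Definition CInt (h : R -> C) (a b : R) : C :=
  (RInt (fun t => fst (h t)) a b, RInt (fun t => snd (h t)) a b).

Definition ex_CInt (h : R -> C) (a b : R) : Prop :=
  ex_RInt (fun t => fst (h t)) a b /\ ex_RInt (fun t => snd (h t)) a b.

Lemma ex_CInt_Chasles h a b c : ex_CInt h a b -> ex_CInt h b c -> ex_CInt h a c.
Proof. intros [? ?] [? ?]; split; eapply (ex_RInt_Chasles (V := R_NormedModule)); eauto. Qed.

Lemma CInt_Chasles h a b c : ex_CInt h a b -> ex_CInt h b c -> (CInt h a b + CInt h b c)%C = CInt h a c.
Proof.
  intros [? ?] [? ?]; unfold CInt, Cplus; simpl.
  rewrite !(RInt_Chasles (V := R_CompleteNormedModule)) by assumption; reflexivity.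
Qed.

Lemma ex_CInt_minus h1 h2 a b : ex_CInt h1 a b -> ex_CInt h2 a b -> ex_CInt (fun t => h1 t - h2 t)%C a b.
Proof. intros [? ?] [? ?]; split; apply (ex_RInt_minus (V := R_NormedModule)); auto. Qed.

Lemma ex_CInt_mult_l (al : C) h a b : ex_CInt h a b -> ex_CInt (fun t => al * h t)%C a b.
Proof.
  assert (Hscal : forall (f : R -> R) k, ex_RInt f a b -> ex_RInt (fun t => k * f t) a b)
    by (intros f k Hf; exact (ex_RInt_scal f a b k Hf)).
  intros [? ?]; split; simpl.
  - apply (ex_RInt_minus (V := R_NormedModule)); apply Hscal; auto.
  - apply (ex_RInt_plus (V := R_NormedModule)); apply Hscal; auto.
Qed.

Lemma CInt_plus h1 h2 a b : ex_CInt h1 a b -> ex_CInt h2 a b ->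
  CInt (fun t => h1 t + h2 t)%C a b = (CInt h1 a b + CInt h2 a b)%C.
Proof.
  intros [? ?] [? ?]; unfold CInt, Cplus; simpl; f_equal.
  - exact (RInt_plus _ _ a b H H1).
  - exact (RInt_plus _ _ a b H0 H2).
Qed.

Lemma CInt_mult_l (al : C) h a b : ex_CInt h a b -> CInt (fun t => al * h t)%C a b = (al * CInt h a b)%C.
Proof.
  intros [Hre Him].
  assert (Hscal : forall (f : R -> R) k, ex_RInt f a b -> RInt (fun t => k * f t) a b = k * RInt f a b)
    by (intros f k Hf; exact (RInt_scal f a b k Hf)).
  assert (Hscal' : forall (f : R -> R) k, ex_RInt f a b -> ex_RInt (fun t => k * f t) a b)
    by (intros f k Hf; exact (ex_RInt_scal f a b k Hf)).
  unfold CInt, Cmult; simpl; f_equal; rewrite <- !Hscal by auto.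
  - exact (RInt_minus _ _ a b (Hscal' _ _ Hre) (Hscal' _ _ Him)).
  - exact (RInt_plus _ _ a b (Hscal' _ _ Him) (Hscal' _ _ Hre)).
Qed.

Lemma Cmod_CInt_le h (B : R -> R) a b : a <= b -> ex_CInt h a b -> ex_RInt B a b ->
  (forall t, a <= t <= b -> Cmod (h t) <= B t) -> Cmod (CInt h a b) <= 2 * RInt B a b.
Proof.
  intros Hab [Hre Him] HB Hh.
  assert (Hcomp : forall f : R -> R, ex_RInt f a b -> (forall t, Rabs (f t) <= Cmod (h t)) ->
    Rabs (RInt f a b) <= RInt B a b).
  { intros f Hf Hfh.
    apply (norm_RInt_le (V := R_NormedModule) f B a b); try apply (RInt_correct (V := R_CompleteNormedModule)); auto.
    intros t Ht; eapply Rle_trans; [apply Hfh | apply Hh, Ht]. }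
  eapply Rle_trans; [apply Cmod_le_Rabs_fst_snd|]; unfold CInt; simpl.
  pose proof (Hcomp _ Hre (fun t => Rabs_fst_le_Cmod (h t))).
  pose proof (Hcomp _ Him (fun t => Rabs_snd_le_Cmod (h t))).
  lra.
Qed.

Lemma Cmod_CInt_le_const h M a b : a <= b -> ex_CInt h a b ->
  (forall t, a <= t <= b -> Cmod (h t) <= M) -> Cmod (CInt h a b) <= 2 * ((b - a) * M).
Proof.
  intros Hab Hh HM; replace ((b - a) * M) with (RInt (fun _ => M) a b) by (rewrite RInt_const; reflexivity).
  apply Cmod_CInt_le; auto; apply ex_RInt_const.
Qed.

Lemma Ccontinuous_at_path (g : C -> C) (P : R -> C) t0 :
  (forall t, Cmod (P t - P t0) <= Rabs (t - t0)) -> Ccontinuous_at g (P t0) ->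
  continuous (fun t => fst (g (P t))) t0 /\ continuous (fun t => snd (g (P t))) t0 /\
  continuous (fun t => Cmod (g (P t))) t0.
Proof.
  intros HP Hg.
  assert (Hnear : forall eps, 0 < eps -> exists del, 0 < del /\ forall t, Rabs (t - t0) < del ->
     Cmod (g (P t) - g (P t0)) < eps).
  { intros eps Heps; destruct (Hg eps Heps) as [del [Hdel Hclose]].
    exists del; split; auto; intros t Ht; apply Hclose; specialize (HP t); lra. }
  split; [|split]; apply filterlim_locally; intros eps;
    destruct (Hnear eps (cond_pos eps)) as [del [Hdel Hclose]];
    exists (mkposreal del Hdel); intros t Ht; specialize (Hclose t Ht).
  - pose proof (Rabs_fst_le_Cmod (g (P t) - g (P t0))); exact (Rle_lt_trans _ _ _ H Hclose).
  - pose proof (Rabs_snd_le_Cmod (g (P t) - g (P t0))); exact (Rle_lt_trans _ _ _ H Hclose).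
  - exact (Rle_lt_trans _ _ _ (Rabs_Cmod_sub_le _ _) Hclose).
Qed.

Lemma Ccontinuous_at_horizontal g v t0 : Ccontinuous_at g (t0, v) ->
  continuous (fun t => fst (g (t, v))) t0 /\ continuous (fun t => snd (g (t, v))) t0 /\
  continuous (fun t => Cmod (g (t, v))) t0.
Proof.
  apply (Ccontinuous_at_path g (fun t => (t, v))); intros t.
  replace ((t, v) - (t0, v))%C with (RtoC (t - t0)) by (unfold RtoC, Cminus, Cplus, Copp; simpl; f_equal; ring).
  rewrite Cmod_R; lra.
Qed.

Lemma Ccontinuous_at_vertical g u t0 : Ccontinuous_at g (u, t0) ->
  continuous (fun t => fst (g (u, t))) t0 /\ continuous (fun t => snd (g (u, t))) t0 /\
  continuous (fun t => Cmod (g (u, t))) t0.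
Proof.
  apply (Ccontinuous_at_path g (fun t => (u, t))); intros t.
  replace ((u, t) - (u, t0))%C with (Ci * RtoC (t - t0))%C
    by (unfold RtoC, Ci, Cminus, Cmult, Cplus, Copp; simpl; f_equal; ring).
  rewrite Cmod_mult, Cmod_Ci, Cmod_R; lra.
Qed.

Lemma ex_CInt_horizontal (g : C -> C) v a b : a <= b ->
  (forall t, a <= t <= b -> Ccontinuous_at g (t, v)) -> ex_CInt (fun t => g (t, v)) a b.
Proof.
  intros Hab Hg; split; apply (ex_RInt_continuous (V := R_CompleteNormedModule));
    rewrite Rmin_left, Rmax_right by lra; intros t Ht; apply (Ccontinuous_at_horizontal g v t (Hg t Ht)).
Qed.

Lemma ex_CInt_vertical (g : C -> C) u a b : a <= b ->
  (forall t, a <= t <= b -> Ccontinuous_at g (u, t)) -> ex_CInt (fun t => g (u, t)) a b.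
Proof.
  intros Hab Hg; split; apply (ex_RInt_continuous (V := R_CompleteNormedModule));
    rewrite Rmin_left, Rmax_right by lra; intros t Ht; apply (Ccontinuous_at_vertical g u t (Hg t Ht)).
Qed.

Definition rect_int (g : C -> C) a b c d : C :=
  (CInt (fun t => g (t, c)) a b + Ci * CInt (fun t => g (b, t)) c d
   - CInt (fun t => g (t, d)) a b - Ci * CInt (fun t => g (a, t)) c d)%C.

Definition ex_rect_int (g : C -> C) a b c d : Prop :=
  ex_CInt (fun t => g (t, c)) a b /\ ex_CInt (fun t => g (b, t)) c d /\
  ex_CInt (fun t => g (t, d)) a b /\ ex_CInt (fun t => g (a, t)) c d.

Lemma ex_rect_int_boundary g a b c d : a <= b -> c <= d ->
  (forall t, a <= t <= b -> Ccontinuous_at g (t, c) /\ Ccontinuous_at g (t, d)) ->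
  (forall t, c <= t <= d -> Ccontinuous_at g (a, t) /\ Ccontinuous_at g (b, t)) -> ex_rect_int g a b c d.
Proof.
  intros Hab Hcd Hh Hv; split; [|split; [|split]].
  - apply ex_CInt_horizontal; [exact Hab | intros t Ht; apply Hh, Ht].
  - apply ex_CInt_vertical; [exact Hcd | intros t Ht; apply Hv, Ht].
  - apply ex_CInt_horizontal; [exact Hab | intros t Ht; apply Hh, Ht].
  - apply ex_CInt_vertical; [exact Hcd | intros t Ht; apply Hv, Ht].
Qed.

Lemma ex_rect_int_closed g a b c d : a <= b -> c <= d ->
  (forall w, a <= fst w <= b -> c <= snd w <= d -> Ccontinuous_at g w) -> ex_rect_int g a b c d.
Proof. intros Hab Hcd Hg; apply ex_rect_int_boundary; auto; intros t Ht; split; apply Hg; simpl; lra. Qed.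

Lemma rect_int_ext g h a b c d : (forall w, g w = h w) -> rect_int g a b c d = rect_int h a b c d.
Proof. intros H; replace h with g by (apply functional_extensionality; auto); reflexivity. Qed.

Lemma ex_rect_int_minus g h a b c d : ex_rect_int g a b c d -> ex_rect_int h a b c d ->
  ex_rect_int (fun w => g w - h w)%C a b c d.
Proof. intros (?&?&?&?) (?&?&?&?); split; [|split; [|split]]; apply (ex_CInt_minus (fun t => g _) (fun t => h _)); auto. Qed.

Lemma ex_rect_int_mult_l al g a b c d : ex_rect_int g a b c d -> ex_rect_int (fun w => al * g w)%C a b c d.
Proof. intros (?&?&?&?); split; [|split; [|split]]; apply (ex_CInt_mult_l al (fun t => g _)); auto. Qed.

Lemma rect_int_plus g h a b c d : ex_rect_int g a b c d -> ex_rect_int h a b c d ->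
  rect_int (fun w => g w + h w)%C a b c d = (rect_int g a b c d + rect_int h a b c d)%C.
Proof.
  intros (?&?&?&?) (?&?&?&?); unfold rect_int.
  rewrite !(CInt_plus (fun t => g _) (fun t => h _)) by auto; ring.
Qed.

Lemma rect_int_mult_l al g a b c d : ex_rect_int g a b c d ->
  rect_int (fun w => al * g w)%C a b c d = (al * rect_int g a b c d)%C.
Proof. intros (?&?&?&?); unfold rect_int; rewrite !(CInt_mult_l al (fun t => g _)) by auto; ring. Qed.

Lemma Cmod_rect_int_le_sides g a b c d : Cmod (rect_int g a b c d) <=
  Cmod (CInt (fun t => g (t, c)) a b) + Cmod (CInt (fun t => g (b, t)) c d) +
  Cmod (CInt (fun t => g (t, d)) a b) + Cmod (CInt (fun t => g (a, t)) c d).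
Proof.
  unfold rect_int.
  set (S1 := CInt (fun t => g (t, c)) a b); set (S2 := CInt (fun t => g (b, t)) c d).
  set (S3 := CInt (fun t => g (t, d)) a b); set (S4 := CInt (fun t => g (a, t)) c d).
  assert (Cmod (Ci * S2) = Cmod S2) by (rewrite Cmod_mult, Cmod_Ci; ring).
  assert (Cmod (Ci * S4) = Cmod S4) by (rewrite Cmod_mult, Cmod_Ci; ring).
  pose proof (Cmod_triangle (S1 + Ci * S2 - S3) (- (Ci * S4))).
  pose proof (Cmod_triangle (S1 + Ci * S2) (- S3)).
  pose proof (Cmod_triangle S1 (Ci * S2)).
  unfold Cminus in *; rewrite !Cmod_opp in *; lra.
Qed.

Lemma Cmod_rect_int_le g a b c d M : a <= b -> c <= d -> ex_rect_int g a b c d ->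
  (forall t, a <= t <= b -> Cmod (g (t, c)) <= M /\ Cmod (g (t, d)) <= M) ->
  (forall t, c <= t <= d -> Cmod (g (a, t)) <= M /\ Cmod (g (b, t)) <= M) ->
  Cmod (rect_int g a b c d) <= 4 * ((b - a) + (d - c)) * M.
Proof.
  intros Hab Hcd (H1&H2&H3&H4) Hh Hv.
  pose proof (Cmod_CInt_le_const _ M _ _ Hab H1 (fun t Ht => proj1 (Hh t Ht))).
  pose proof (Cmod_CInt_le_const _ M _ _ Hcd H2 (fun t Ht => proj2 (Hv t Ht))).
  pose proof (Cmod_CInt_le_const _ M _ _ Hab H3 (fun t Ht => proj2 (Hh t Ht))).
  pose proof (Cmod_CInt_le_const _ M _ _ Hcd H4 (fun t Ht => proj1 (Hv t Ht))).
  pose proof (Cmod_rect_int_le_sides g a b c d); lra.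
Qed.

Lemma rect_int_quadrisect g a b c d m n :
  ex_rect_int g a m c n -> ex_rect_int g m b c n -> ex_rect_int g a m n d -> ex_rect_int g m b n d ->
  rect_int g a b c d = (rect_int g a m c n + rect_int g m b c n + rect_int g a m n d + rect_int g m b n d)%C.
Proof.
  intros (A1&A2&A3&A4) (B1&B2&B3&B4) (C1&C2&C3&C4) (D1&D2&D3&D4); unfold rect_int.
  rewrite <- (CInt_Chasles (fun t => g (t, c)) a m b) by auto.
  rewrite <- (CInt_Chasles (fun t => g (t, d)) a m b) by auto.
  rewrite <- (CInt_Chasles (fun t => g (b, t)) c n d) by auto.
  rewrite <- (CInt_Chasles (fun t => g (a, t)) c n d) by auto.
  ring.
Qed.

Lemma rect_int_frame g a1 a2 a3 a4 c1 c2 c3 c4 :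
  ex_rect_int g a1 a4 c1 c2 -> ex_rect_int g a1 a4 c3 c4 -> ex_rect_int g a1 a2 c2 c3 ->
  ex_rect_int g a3 a4 c2 c3 -> ex_rect_int g a2 a3 c2 c3 ->
  rect_int g a1 a4 c1 c4 = (rect_int g a1 a4 c1 c2 + rect_int g a1 a4 c3 c4 + rect_int g a1 a2 c2 c3
                            + rect_int g a3 a4 c2 c3 + rect_int g a2 a3 c2 c3)%C.
Proof.
  intros (b1&b2&b3&b4) (t1&t2&t3&t4) (l1&l2&l3&l4) (r1&r2&r3&r4) (m1&m2&m3&m4).
  assert (X1 : ex_CInt (fun t => g (a4, t)) c2 c4) by (apply ex_CInt_Chasles with c3; auto).
  assert (X2 : ex_CInt (fun t => g (a1, t)) c2 c4) by (apply ex_CInt_Chasles with c3; auto).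
  assert (X3 : ex_CInt (fun t => g (t, c2)) a2 a4) by (apply ex_CInt_Chasles with a3; auto).
  assert (X4 : ex_CInt (fun t => g (t, c3)) a2 a4) by (apply ex_CInt_Chasles with a3; auto).
  unfold rect_int.
  rewrite <- (CInt_Chasles (fun t => g (a4, t)) c1 c2 c4) by auto.
  rewrite <- (CInt_Chasles (fun t => g (a4, t)) c2 c3 c4) by auto.
  rewrite <- (CInt_Chasles (fun t => g (a1, t)) c1 c2 c4) by auto.
  rewrite <- (CInt_Chasles (fun t => g (a1, t)) c2 c3 c4) by auto.
  rewrite <- (CInt_Chasles (fun t => g (t, c2)) a1 a2 a4) by auto.
  rewrite <- (CInt_Chasles (fun t => g (t, c2)) a2 a3 a4) by auto.
  rewrite <- (CInt_Chasles (fun t => g (t, c3)) a1 a2 a4) by auto.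
  rewrite <- (CInt_Chasles (fun t => g (t, c3)) a2 a3 a4) by auto.
  ring.
Qed.

Lemma is_RInt_affine (f : R -> R) p q a b : (forall t, f t = p + q * t) ->
  is_RInt f a b (p * (b - a) + q * (b * b - a * a) / 2).
Proof.
  intros Hf; apply (is_RInt_ext (fun t => p + q * t)); [intros t _; rewrite Hf; reflexivity|].
  replace (p * (b - a) + q * (b * b - a * a) / 2) with
    (minus ((fun t => p * t + q * (t * t) / 2) b) ((fun t => p * t + q * (t * t) / 2) a))
    by (unfold minus, plus, opp; simpl; field).
  apply (is_RInt_derive (V := R_CompleteNormedModule) (fun t => p * t + q * (t * t) / 2)).
  - intros t _; auto_derive; auto; field.
  - intros t _; apply (ex_derive_continuous (K := R_AbsRing) (V := R_NormedModule)); auto_derive; auto.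
Qed.

Lemma CInt_affine_horizontal al be c a b : CInt (fun t => al + be * (t, c))%C a b =
  ((fst al - snd be * c) * (b - a) + fst be * (b * b - a * a) / 2,
   (snd al + fst be * c) * (b - a) + snd be * (b * b - a * a) / 2).
Proof.
  destruct al as [a1 a2], be as [b1 b2]; unfold CInt; simpl.
  f_equal; apply is_RInt_unique, is_RInt_affine; intros; ring.
Qed.

Lemma CInt_affine_vertical al be u a b : CInt (fun t => al + be * (u, t))%C a b =
  ((fst al + fst be * u) * (b - a) + (- snd be) * (b * b - a * a) / 2,
   (snd al + snd be * u) * (b - a) + fst be * (b * b - a * a) / 2).
Proof.
  destruct al as [a1 a2], be as [b1 b2]; unfold CInt; simpl.
  f_equal; apply is_RInt_unique, is_RInt_affine; intros; ring.
Qed.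

Lemma rect_int_affine al be a b c d : rect_int (fun w => al + be * w)%C a b c d = 0%C.
Proof.
  unfold rect_int; rewrite !CInt_affine_horizontal, !CInt_affine_vertical.
  destruct al as [a1 a2], be as [b1 b2].
  unfold Cminus, Cplus, Copp, Cmult, Ci, RtoC; simpl; apply injective_projections; simpl; field.
Qed.

Lemma ex_CInt_affine_horizontal al be c a b : ex_CInt (fun t => al + be * (t, c))%C a b.
Proof.
  destruct al as [a1 a2], be as [b1 b2]; split; simpl.
  - eexists; apply (is_RInt_affine _ (a1 - b2 * c) b1); intros; ring.
  - eexists; apply (is_RInt_affine _ (a2 + b1 * c) b2); intros; ring.
Qed.

Lemma ex_CInt_affine_vertical al be u a b : ex_CInt (fun t => al + be * (u, t))%C a b.
Proof.
  destruct al as [a1 a2], be as [b1 b2]; split; simpl.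
  - eexists; apply (is_RInt_affine _ (a1 + b1 * u) (- b2)); intros; ring.
  - eexists; apply (is_RInt_affine _ (a2 + b2 * u) b1); intros; ring.
Qed.

Lemma ex_rect_int_affine al be a b c d : ex_rect_int (fun w => al + be * w)%C a b c d.
Proof.
  split; [|split; [|split]]; auto using ex_CInt_affine_horizontal, ex_CInt_affine_vertical.
Qed.

(** * Goursat's theorem *)

Record rect := mk_rect { rect_a : R; rect_b : R; rect_c : R; rect_d : R }.

Definition rect_int_of (g : C -> C) (r : rect) := rect_int g (rect_a r) (rect_b r) (rect_c r) (rect_d r).
Definition semiperimeter (r : rect) := (rect_b r - rect_a r) + (rect_d r - rect_c r).

Definition within a b c d (r : rect) :=
  a <= rect_a r /\ rect_a r <= rect_b r /\ rect_b r <= b /\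
  c <= rect_c r /\ rect_c r <= rect_d r /\ rect_d r <= d.

Definition quarter_ll r := mk_rect (rect_a r) ((rect_a r + rect_b r) / 2) (rect_c r) ((rect_c r + rect_d r) / 2).
Definition quarter_lr r := mk_rect ((rect_a r + rect_b r) / 2) (rect_b r) (rect_c r) ((rect_c r + rect_d r) / 2).
Definition quarter_ul r := mk_rect (rect_a r) ((rect_a r + rect_b r) / 2) ((rect_c r + rect_d r) / 2) (rect_d r).
Definition quarter_ur r := mk_rect ((rect_a r + rect_b r) / 2) (rect_b r) ((rect_c r + rect_d r) / 2) (rect_d r).

Definition goursat_bad eps g r := eps * (semiperimeter r * semiperimeter r) < Cmod (rect_int_of g r).

Definition bad_quarter eps g r :=
  if Rlt_dec (eps * (semiperimeter (quarter_ll r) * semiperimeter (quarter_ll r))) (Cmod (rect_int_of g (quarter_ll r)))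
  then quarter_ll r else
  if Rlt_dec (eps * (semiperimeter (quarter_lr r) * semiperimeter (quarter_lr r))) (Cmod (rect_int_of g (quarter_lr r)))
  then quarter_lr r else
  if Rlt_dec (eps * (semiperimeter (quarter_ul r) * semiperimeter (quarter_ul r))) (Cmod (rect_int_of g (quarter_ul r)))
  then quarter_ul r else quarter_ur r.

Lemma INR_le_pow2 n : INR n <= 2 ^ n.
Proof.
  induction n as [|n IH]; [simpl; lra|].
  rewrite S_INR; simpl; assert (1 <= 2 ^ n) by (apply pow_R1_Rle; lra); lra.
Qed.

Section Goursat.

Variable g : C -> C.
Variables a b c d : R.
Hypothesis g_derive : forall w, a <= fst w <= b -> c <= snd w <= d -> ex_derive_C g w.

Lemma ex_rect_int_within r : within a b c d r -> ex_rect_int g (rect_a r) (rect_b r) (rect_c r) (rect_d r).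
Proof.
  intros (?&?&?&?&?&?); apply ex_rect_int_closed; auto.
  intros w Hw1 Hw2; apply ex_derive_C_Ccontinuous_at, g_derive; lra.
Qed.

(* Of the four quarters of a bad rectangle one is bad, since the four boundary integrals add up
   and each quarter has half the semiperimeter. *)
Lemma bad_quarter_spec eps r : within a b c d r -> goursat_bad eps g r ->
  let r' := bad_quarter eps g r in
  within a b c d r' /\ goursat_bad eps g r' /\
  rect_a r <= rect_a r' /\ rect_b r' <= rect_b r /\ rect_c r <= rect_c r' /\ rect_d r' <= rect_d r /\
  rect_b r' - rect_a r' = (rect_b r - rect_a r) / 2 /\ rect_d r' - rect_c r' = (rect_d r - rect_c r) / 2.
Proof.
  intros Hin Hbad r'; pose proof Hin as (?&?&?&?&?&?).
  assert (I1 : within a b c d (quarter_ll r)) by (unfold within, quarter_ll; simpl; lra).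
  assert (I2 : within a b c d (quarter_lr r)) by (unfold within, quarter_lr; simpl; lra).
  assert (I3 : within a b c d (quarter_ul r)) by (unfold within, quarter_ul; simpl; lra).
  assert (I4 : within a b c d (quarter_ur r)) by (unfold within, quarter_ur; simpl; lra).
  unfold r', bad_quarter.
  destruct (Rlt_dec _ _) as [B1|B1].
  { repeat split; unfold quarter_ll; simpl; try lra; try exact B1; apply I1. }
  destruct (Rlt_dec _ _) as [B2|B2].
  { repeat split; unfold quarter_lr; simpl; try lra; try exact B2; apply I2. }
  destruct (Rlt_dec _ _) as [B3|B3].
  { repeat split; unfold quarter_ul; simpl; try lra; try exact B3; apply I3. }
  assert (B4 : goursat_bad eps g (quarter_ur r)).
  { apply Rnot_le_lt; intros B4; apply Rnot_lt_le in B1, B2, B3; unfold goursat_bad in Hbad.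
    assert (E : rect_int_of g r = (rect_int_of g (quarter_ll r) + rect_int_of g (quarter_lr r)
                                   + rect_int_of g (quarter_ul r) + rect_int_of g (quarter_ur r))%C)
      by (apply (rect_int_quadrisect g _ _ _ _ ((rect_a r + rect_b r) / 2) ((rect_c r + rect_d r) / 2));
          [exact (ex_rect_int_within _ I1) | exact (ex_rect_int_within _ I2)
          | exact (ex_rect_int_within _ I3) | exact (ex_rect_int_within _ I4)]).
    rewrite E in Hbad.
    replace (semiperimeter (quarter_ll r)) with (semiperimeter r / 2) in B1 by (unfold semiperimeter; simpl; field).
    replace (semiperimeter (quarter_lr r)) with (semiperimeter r / 2) in B2 by (unfold semiperimeter; simpl; field).
    replace (semiperimeter (quarter_ul r)) with (semiperimeter r / 2) in B3 by (unfold semiperimeter; simpl; field).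
    replace (semiperimeter (quarter_ur r)) with (semiperimeter r / 2) in B4 by (unfold semiperimeter; simpl; field).
    pose proof (Cmod_triangle (rect_int_of g (quarter_ll r) + rect_int_of g (quarter_lr r)
                               + rect_int_of g (quarter_ul r))%C (rect_int_of g (quarter_ur r))).
    pose proof (Cmod_triangle (rect_int_of g (quarter_ll r) + rect_int_of g (quarter_lr r))%C
                              (rect_int_of g (quarter_ul r))).
    pose proof (Cmod_triangle (rect_int_of g (quarter_ll r)) (rect_int_of g (quarter_lr r))).
    lra. }
  repeat split; unfold quarter_ur; simpl; try lra; try exact B4; apply I4.
Qed.

Fixpoint bad_nest eps r0 n := match n with O => r0 | S n => bad_quarter eps g (bad_nest eps r0 n) end.

Section Nest.

Variables (eps : R) (r0 : rect).
Hypotheses (r0_within : within a b c d r0) (r0_bad : goursat_bad eps g r0).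

Lemma bad_nest_spec n :
  within a b c d (bad_nest eps r0 n) /\ goursat_bad eps g (bad_nest eps r0 n) /\
  rect_b (bad_nest eps r0 n) - rect_a (bad_nest eps r0 n) = (rect_b r0 - rect_a r0) / 2 ^ n /\
  rect_d (bad_nest eps r0 n) - rect_c (bad_nest eps r0 n) = (rect_d r0 - rect_c r0) / 2 ^ n.
Proof.
  induction n as [|n (I & B & E1 & E2)].
  { simpl; split; [exact r0_within | split; [exact r0_bad | split; field]]. }
  destruct (bad_quarter_spec eps _ I B) as (I' & B' & _ & _ & _ & _ & E1' & E2').
  simpl; split; [exact I' | split; [exact B' | split]].
  - rewrite E1', E1; field; apply pow_nonzero; lra.
  - rewrite E2', E2; field; apply pow_nonzero; lra.
Qed.

Lemma bad_nest_mono n k :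
  rect_a (bad_nest eps r0 n) <= rect_a (bad_nest eps r0 (n + k)) /\
  rect_b (bad_nest eps r0 (n + k)) <= rect_b (bad_nest eps r0 n) /\
  rect_c (bad_nest eps r0 n) <= rect_c (bad_nest eps r0 (n + k)) /\
  rect_d (bad_nest eps r0 (n + k)) <= rect_d (bad_nest eps r0 n).
Proof.
  induction k as [|k IH]; [rewrite Nat.add_0_r; lra|].
  rewrite Nat.add_succ_r; simpl.
  destruct (bad_nest_spec (n + k)) as (I & B & _ & _).
  destruct (bad_quarter_spec eps _ I B) as (_ & _ & ? & ? & ? & ? & _ & _); lra.
Qed.

Lemma bad_nest_common_point : exists w0 : C, forall n,
  rect_a (bad_nest eps r0 n) <= fst w0 <= rect_b (bad_nest eps r0 n) /\
  rect_c (bad_nest eps r0 n) <= snd w0 <= rect_d (bad_nest eps r0 n).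
Proof.
  assert (Hcross : forall n m, rect_a (bad_nest eps r0 n) <= rect_b (bad_nest eps r0 m) /\
                              rect_c (bad_nest eps r0 n) <= rect_d (bad_nest eps r0 m)).
  { intros n m; destruct (bad_nest_spec (n + m)) as ((?&?&?&?&?&?) & _).
    destruct (bad_nest_mono n m) as (?&?&?&?); destruct (bad_nest_mono m n) as (N1&N2&N3&N4).
    rewrite Nat.add_comm in N1, N2, N3, N4; lra. }
  destruct (completeness (fun t => exists n, t = rect_a (bad_nest eps r0 n))) as [u0 [Hu1 Hu2]].
  { exists (rect_b r0); intros t [n ->]; apply (Hcross n O). }
  { exists (rect_a r0), O; reflexivity. }
  destruct (completeness (fun t => exists n, t = rect_c (bad_nest eps r0 n))) as [v0 [Hv1 Hv2]].
  { exists (rect_d r0); intros t [n ->]; apply (Hcross n O). }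
  { exists (rect_c r0), O; reflexivity. }
  exists (u0, v0); intros n; simpl; repeat split.
  - apply Hu1; exists n; reflexivity.
  - apply Hu2; intros t [k ->]; apply Hcross.
  - apply Hv1; exists n; reflexivity.
  - apply Hv2; intros t [k ->]; apply Hcross.
Qed.

End Nest.

(* Affine functions have vanishing boundary integrals, so only the remainder of the linear
   approximation at w0 contributes. *)
Lemma Cmod_rect_int_le_linear_approx (w0 l : C) e r : within a b c d r ->
  rect_a r <= fst w0 <= rect_b r -> rect_c r <= snd w0 <= rect_d r ->
  (forall w, Cmod (w - w0) <= semiperimeter r -> Cmod (g w - g w0 - l * (w - w0)) <= e * Cmod (w - w0)) ->
  0 <= e -> Cmod (rect_int_of g r) <= 4 * e * (semiperimeter r * semiperimeter r).
Proof.
  intros Hin Hu Hv Happrox He; pose proof Hin as (?&?&?&?&?&?).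
  set (al := (g w0 - l * w0)%C).
  assert (Hrem : forall w, rect_a r <= fst w <= rect_b r -> rect_c r <= snd w <= rect_d r ->
    Cmod (g w - (al + l * w)) <= e * semiperimeter r).
  { intros w Hw1 Hw2.
    assert (Hdist : Cmod (w - w0) <= semiperimeter r).
    { eapply Rle_trans; [apply Cmod_sub_le_Rabs_fst_snd|]; unfold semiperimeter.
      assert (Rabs (fst w - fst w0) <= rect_b r - rect_a r) by (apply Rabs_le; lra).
      assert (Rabs (snd w - snd w0) <= rect_d r - rect_c r) by (apply Rabs_le; lra); lra. }
    replace (g w - (al + l * w))%C with (g w - g w0 - l * (w - w0))%C by (unfold al; ring).
    eapply Rle_trans; [apply Happrox, Hdist | apply Rmult_le_compat_l; lra]. }
  assert (Hrem_ex : ex_rect_int (fun w => g w - (al + l * w))%C (rect_a r) (rect_b r) (rect_c r) (rect_d r))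
    by (apply ex_rect_int_minus; [apply ex_rect_int_within, Hin | apply ex_rect_int_affine]).
  unfold rect_int_of; rewrite (rect_int_ext g (fun w => (g w - (al + l * w)) + (al + l * w))%C) by (intros; ring).
  rewrite rect_int_plus, rect_int_affine, Cplus_0_r by (auto using ex_rect_int_affine).
  eapply Rle_trans; [apply (Cmod_rect_int_le _ _ _ _ _ (e * semiperimeter r)); try lra; auto|].
  - intros t Ht; split; apply Hrem; simpl; lra.
  - intros t Ht; split; apply Hrem; simpl; lra.
  - right; unfold semiperimeter; ring.
Qed.

(* A nest of bad rectangles shrinks to a point w0 near which g is affine up to o(|w - w0|),
   so the small rectangles of the nest cannot be bad. *)
Lemma goursat_estimate eps : 0 < eps -> a <= b -> c <= d ->
  Cmod (rect_int g a b c d) <= eps * (((b - a) + (d - c)) * ((b - a) + (d - c))).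
Proof.
  intros Heps Hab Hcd; set (r0 := mk_rect a b c d).
  assert (Hr0 : within a b c d r0) by (unfold within, r0; simpl; lra).
  apply Rnot_lt_le; intros Hbad0.
  destruct (bad_nest_common_point eps r0 Hr0 Hbad0) as [w0 Hw0].
  destruct (Hw0 O) as [[Ha0 Hb0] [Hc0 Hd0]]; simpl in Ha0, Hb0, Hc0, Hd0.
  destruct (ex_derive_C_linear_approx g w0 (g_derive w0 ltac:(lra) ltac:(lra))) as [l Hl].
  destruct (Hl (eps / 4) ltac:(lra)) as [rho [Hrho Happrox]].
  destruct (INR_archimed rho ((b - a) + (d - c)) Hrho) as [n Hn].
  pose proof (INR_le_pow2 n); assert (Hpow : 0 < 2 ^ n) by (apply pow_lt; lra).
  destruct (bad_nest_spec eps r0 Hr0 Hbad0 n) as (Hin & Hbad & E1 & E2).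
  destruct (Hw0 n) as [Hu Hv]; set (r := bad_nest eps r0 n) in *.
  assert (Hsmall : semiperimeter r < rho).
  { unfold semiperimeter; rewrite E1, E2; unfold r0; simpl.
    apply Rmult_lt_reg_r with (2 ^ n); auto.
    replace (((b - a) / 2 ^ n + (d - c) / 2 ^ n) * 2 ^ n) with ((b - a) + (d - c)) by (field; lra).
    nra. }
  assert (Hbound := Cmod_rect_int_le_linear_approx w0 l (eps / 4) r Hin Hu Hv
    (fun w Hw => Happrox w ltac:(lra)) ltac:(lra)).
  unfold goursat_bad in Hbad; lra.
Qed.

Theorem goursat : a <= b -> c <= d -> rect_int g a b c d = 0%C.
Proof.
  intros Hab Hcd; apply Cmod_eq_0.
  set (L := ((b - a) + (d - c)) * ((b - a) + (d - c))); assert (0 <= L) by (unfold L; nra).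
  pose proof (Cmod_ge_0 (rect_int g a b c d)).
  destruct (Req_dec (Cmod (rect_int g a b c d)) 0) as [E|E]; auto; exfalso.
  set (m := Cmod (rect_int g a b c d)) in *.
  pose proof (goursat_estimate (m / (2 * (L + 1))) ltac:(apply Rdiv_lt_0_compat; lra) Hab Hcd) as Hest.
  fold m L in Hest.
  assert (m / (2 * (L + 1)) * L < m).
  { apply Rmult_lt_reg_r with (2 * (L + 1)); [lra|].
    replace (m / (2 * (L + 1)) * L * (2 * (L + 1))) with (m * L) by (field; lra); nra. }
  lra.
Qed.

End Goursat.

(** * A Cauchy-type estimate *)

Lemma Csub_neq_0 (w z : C) : fst w <> fst z \/ snd w <> snd z -> (w - z)%C <> 0%C.
Proof.
  intros H E; destruct w as [p q], z as [u v]; unfold Cminus, Cplus, Copp, RtoC in E; simpl in *.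
  injection E; intros; destruct H; lra.
Qed.

Lemma RInt_ge_const (f : R -> R) a b k : a <= b -> ex_RInt f a b ->
  (forall t, a <= t <= b -> k <= f t) -> (b - a) * k <= RInt f a b.
Proof.
  intros Hab Hf Hk; replace ((b - a) * k) with (RInt (fun _ => k) a b) by (rewrite RInt_const; reflexivity).
  apply RInt_le; auto; [apply ex_RInt_const | intros t Ht; apply Hk; lra].
Qed.

Lemma RInt_le_const (f : R -> R) a b k : a <= b -> ex_RInt f a b ->
  (forall t, a <= t <= b -> f t <= k) -> RInt f a b <= (b - a) * k.
Proof.
  intros Hab Hf Hk; replace ((b - a) * k) with (RInt (fun _ => k) a b) by (rewrite RInt_const; reflexivity).
  apply RInt_le; auto; [apply ex_RInt_const | intros t Ht; apply Hk; lra].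
Qed.

Lemma half_inv_le_div sg p q : 0 < sg -> Rabs p <= sg -> q ^ 2 = sg ^ 2 ->
  1 / (2 * sg) <= sg / (p ^ 2 + q ^ 2).
Proof.
  intros Hsg Hp Hq; rewrite Hq; apply Rabs_le_between in Hp.
  assert (0 < p ^ 2 + sg ^ 2) by nra.
  apply Rmult_le_reg_r with (2 * sg * (p ^ 2 + sg ^ 2)); [nra|].
  replace (1 / (2 * sg) * (2 * sg * (p ^ 2 + sg ^ 2))) with (p ^ 2 + sg ^ 2) by (field; lra).
  replace (sg / (p ^ 2 + sg ^ 2) * (2 * sg * (p ^ 2 + sg ^ 2))) with (2 * sg * sg) by (field; lra).
  nra.
Qed.

Lemma opp_div_le_opp_half_inv sg p q : 0 < sg -> Rabs p <= sg -> q ^ 2 = sg ^ 2 ->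
  - sg / (p ^ 2 + q ^ 2) <= - (1 / (2 * sg)).
Proof.
  intros Hsg Hp Hq; pose proof (half_inv_le_div sg p q Hsg Hp Hq).
  replace (- sg / (p ^ 2 + q ^ 2)) with (- (sg / (p ^ 2 + q ^ 2))) by (unfold Rdiv; ring); lra.
Qed.

Lemma ex_derive_C_inv_sub (z w : C) : w <> z -> ex_derive_C (fun u => / (u - z))%C w.
Proof.
  intros Hwz; apply (ex_derive_C_Cinv (fun u => u - z)%C);
    [apply ex_derive_C_minus; [apply ex_derive_C_id | apply ex_derive_C_const] |].
  intros E; apply Hwz; replace w with ((w - z) + z)%C by ring; rewrite E; ring.
Qed.

(* Each side of the square contributes at least 1 to the imaginary part (the exact value is 2 pi). *)
Lemma Cmod_rect_int_inv_sub_square x y sg : 0 < sg ->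
  4 <= Cmod (rect_int (fun w => / (w - (x, y)))%C (x - sg) (x + sg) (y - sg) (y + sg)).
Proof.
  intros Hsg.
  assert (Hcont : forall w, fst w <> x \/ snd w <> y -> Ccontinuous_at (fun u => / (u - (x, y)))%C w).
  { intros w Hw; apply ex_derive_C_Ccontinuous_at, ex_derive_C_inv_sub.
    intros E; apply (Csub_neq_0 w (x, y) Hw); rewrite E; ring. }
  destruct (ex_rect_int_boundary (fun w => / (w - (x, y)))%C (x - sg) (x + sg) (y - sg) (y + sg))
    as ((_ & Hbot) & (Hright & _) & (_ & Htop) & (Hleft & _)); try lra.
  { intros t Hts; split; apply Hcont; simpl; lra. }
  { intros t Hts; split; apply Hcont; simpl; lra. }
  eapply Rle_trans; [|apply Rabs_snd_le_Cmod]; eapply Rle_trans; [|apply Rle_abs].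
  unfold rect_int, CInt.
  set (Ib := RInt (fun t => snd (/ ((t, (y - sg)%R) - (x, y)))%C) (x - sg) (x + sg)) in *.
  set (Ir := RInt (fun t => fst (/ (((x + sg)%R, t) - (x, y)))%C) (y - sg) (y + sg)) in *.
  set (It := RInt (fun t => snd (/ ((t, (y + sg)%R) - (x, y)))%C) (x - sg) (x + sg)) in *.
  set (Il := RInt (fun t => fst (/ (((x - sg)%R, t) - (x, y)))%C) (y - sg) (y + sg)) in *.
  assert (Hone : forall u, (u + sg - (u - sg)) * (1 / (2 * sg)) = 1) by (intros; field; lra).
  assert (Hmone : forall u, (u + sg - (u - sg)) * - (1 / (2 * sg)) = -1) by (intros; field; lra).
  assert (Bb : 1 <= Ib).
  { rewrite <- (Hone x); apply RInt_ge_const; auto; [lra|]; intros t Ht.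
    unfold Cinv, Cminus, Cplus, Copp; cbn [fst snd].
    replace (- (y - sg + - y)) with sg by ring; apply half_inv_le_div; [lra | apply Rabs_le; lra | ring]. }
  assert (Br : 1 <= Ir).
  { rewrite <- (Hone y); apply RInt_ge_const; auto; [lra|]; intros t Ht.
    unfold Cinv, Cminus, Cplus, Copp; cbn [fst snd].
    replace (x + sg + - x) with sg by ring; rewrite Rplus_comm;
      apply half_inv_le_div; [lra | apply Rabs_le; lra | ring]. }
  assert (Bt : It <= -1).
  { rewrite <- (Hmone x).
    apply RInt_le_const; auto; [lra|]; intros t Ht.
    unfold Cinv, Cminus, Cplus, Copp; cbn [fst snd].
    replace (- (y + sg + - y)) with (- sg) by ring;
      apply opp_div_le_opp_half_inv; [lra | apply Rabs_le; lra | ring]. }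
  assert (Bl : Il <= -1).
  { rewrite <- (Hmone y).
    apply RInt_le_const; auto; [lra|]; intros t Ht.
    unfold Cinv, Cminus, Cplus, Copp; cbn [fst snd].
    replace (x - sg + - x) with (- sg) by ring; rewrite Rplus_comm;
      apply opp_div_le_opp_half_inv; [lra | apply Rabs_le; lra | ring]. }
  unfold Cminus, Cplus, Copp, Cmult, Ci; cbn [fst snd]; lra.
Qed.

Section CauchyEstimate.

Variable F : C -> C.
Variables a b c d x y : R.
Hypotheses (Hx : a < x < b) (Hy : c < y < d).
Hypothesis F_derive : forall w, a <= fst w <= b -> c <= snd w <= d -> ex_derive_C F w.

Let z : C := (x, y).

Lemma ex_derive_C_div_sub w : a <= fst w <= b -> c <= snd w <= d -> fst w <> x \/ snd w <> y ->
  ex_derive_C (fun u => (F u - F z) * / (u - z))%C w /\ ex_derive_C (fun u => F u * / (u - z))%C w.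
Proof.
  intros Hw1 Hw2 Hw.
  assert (Hinv : ex_derive_C (fun u => / (u - z))%C w) by (apply ex_derive_C_inv_sub; intros ->; simpl in Hw; lra).
  split; apply ex_derive_C_mult; auto.
  apply ex_derive_C_minus; [apply F_derive; auto | apply ex_derive_C_const].
Qed.

(* Goursat on the four pieces of the frame around the square, none of which contains z. *)
Lemma rect_int_div_sub_shrink sg : 0 < sg -> sg < x - a -> sg < b - x -> sg < y - c -> sg < d - y ->
  rect_int (fun w => F w * / (w - z))%C a b c d =
  rect_int (fun w => F w * / (w - z))%C (x - sg) (x + sg) (y - sg) (y + sg).
Proof.
  intros Hsg Ha Hb Hc Hd; set (g := fun w => (F w * / (w - z))%C).
  assert (Hoff : forall w, a <= fst w <= b -> c <= snd w <= d -> fst w <> x \/ snd w <> y -> ex_derive_C g w)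
    by (intros; apply ex_derive_C_div_sub; auto).
  assert (Hcont : forall w, a <= fst w <= b -> c <= snd w <= d -> fst w <> x \/ snd w <> y -> Ccontinuous_at g w)
    by (intros; apply ex_derive_C_Ccontinuous_at, Hoff; auto).
  rewrite (rect_int_frame g a (x - sg) (x + sg) b c (y - sg) (y + sg) d).
  - rewrite (goursat g a b c (y - sg)), (goursat g a b (y + sg) d), (goursat g a (x - sg) (y - sg) (y + sg)),
      (goursat g (x + sg) b (y - sg) (y + sg)) by (lra || (intros w Hw1 Hw2; apply Hoff; simpl; lra)).
    ring.
  - apply ex_rect_int_closed; try lra; intros w Hw1 Hw2; apply Hcont; lra.
  - apply ex_rect_int_closed; try lra; intros w Hw1 Hw2; apply Hcont; lra.
  - apply ex_rect_int_closed; try lra; intros w Hw1 Hw2; apply Hcont; lra.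
  - apply ex_rect_int_closed; try lra; intros w Hw1 Hw2; apply Hcont; lra.
  - apply ex_rect_int_boundary; try lra; intros t Ht; split; apply Hcont; simpl; lra.
Qed.

(* On the square, F(w)/(w - z) = F(z)/(w - z) + (F(w) - F(z))/(w - z) and |w - z| >= sg on its boundary. *)
Lemma Cmod_le_rect_int_div_sub_square sg e : 0 < sg -> sg < x - a -> sg < b - x -> sg < y - c -> sg < d - y ->
  (forall w, Rabs (fst w - x) <= sg -> Rabs (snd w - y) <= sg -> Cmod (F w - F z) <= e) ->
  4 * Cmod (F z) <= Cmod (rect_int (fun w => F w * / (w - z))%C (x - sg) (x + sg) (y - sg) (y + sg)) + 16 * e.
Proof.
  intros Hsg Ha Hb Hc Hd He.
  set (J := fun w => (/ (w - z))%C); set (Rem := fun w => ((F w - F z) * / (w - z))%C).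
  assert (HexJ : ex_rect_int J (x - sg) (x + sg) (y - sg) (y + sg)).
  { apply ex_rect_int_boundary; try lra; intros t Ht; split;
      apply ex_derive_C_Ccontinuous_at, ex_derive_C_inv_sub; intros E; injection E; lra. }
  assert (HexRem : ex_rect_int Rem (x - sg) (x + sg) (y - sg) (y + sg)).
  { apply ex_rect_int_boundary; try lra; intros t Ht; split;
      apply ex_derive_C_Ccontinuous_at, ex_derive_C_div_sub; simpl; lra. }
  assert (HRem_pt : forall w, sg <= Cmod (w - z) -> Rabs (fst w - x) <= sg -> Rabs (snd w - y) <= sg ->
    Cmod (Rem w) <= e / sg).
  { intros w Hwz Hwx Hwy.
    assert (Hnz : (w - z)%C <> 0%C) by (intros E; rewrite E, Cmod_0 in Hwz; lra).
    unfold Rem; rewrite Cmod_mult, Cmod_inv by exact Hnz.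
    pose proof (He w Hwx Hwy); pose proof (Cmod_ge_0 (F w - F z)).
    apply Rle_trans with (e * / Cmod (w - z)).
    - apply Rmult_le_compat_r; [left; apply Rinv_0_lt_compat|]; lra.
    - unfold Rdiv; apply Rmult_le_compat_l; [lra | apply Rinv_le_contravar; lra]. }
  assert (HRem : Cmod (rect_int Rem (x - sg) (x + sg) (y - sg) (y + sg)) <= 16 * e).
  { eapply Rle_trans; [apply (Cmod_rect_int_le _ _ _ _ _ (e / sg)); auto; try lra|].
    - intros t Ht; split; apply HRem_pt; simpl; try (apply Rabs_le; lra);
        (eapply Rle_trans; [|apply Rabs_snd_le_Cmod]; simpl; first [rewrite Rabs_left by lra | rewrite Rabs_right by lra]; lra).
    - intros t Ht; split; apply HRem_pt; simpl; try (apply Rabs_le; lra);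
        (eapply Rle_trans; [|apply Rabs_fst_le_Cmod]; simpl; first [rewrite Rabs_left by lra | rewrite Rabs_right by lra]; lra).
    - right; field; lra. }
  rewrite (rect_int_ext _ (fun w => F z * J w + Rem w)%C) by (intros; unfold J, Rem; ring).
  rewrite rect_int_plus, rect_int_mult_l by auto using ex_rect_int_mult_l.
  pose proof (Cmod_rect_int_inv_sub_square x y sg Hsg) as HJ; fold z J in HJ.
  set (IJ := rect_int J (x - sg) (x + sg) (y - sg) (y + sg)) in *.
  set (IRem := rect_int Rem (x - sg) (x + sg) (y - sg) (y + sg)) in *.
  pose proof (Cmod_triangle (F z * IJ + IRem) (- IRem)) as Htri.
  replace (F z * IJ + IRem + - IRem)%C with (F z * IJ)%C in Htri by ring.
  rewrite Cmod_opp, Cmod_mult in Htri.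
  pose proof (Cmod_ge_0 (F z)); nra.
Qed.

Theorem Cmod_le_rect_int_div_sub : 4 * Cmod (F z) <= Cmod (rect_int (fun w => F w * / (w - z))%C a b c d).
Proof.
  apply Rle_plus_epsilon; intros eps Heps.
  destruct (ex_derive_C_Ccontinuous_at F z (F_derive z ltac:(simpl; lra) ltac:(simpl; lra)) (eps / 16))
    as [del [Hdel HFdel]]; [lra|].
  set (sg := Rmin (Rmin (del / 4) (Rmin (x - a) (b - x) / 2)) (Rmin (y - c) (d - y) / 2)).
  assert (Hsg : 0 < sg /\ sg <= del / 4 /\ 2 * sg <= x - a /\ 2 * sg <= b - x /\
                 2 * sg <= y - c /\ 2 * sg <= d - y).
  { unfold sg; pose proof (Rmin_l (Rmin (del / 4) (Rmin (x - a) (b - x) / 2)) (Rmin (y - c) (d - y) / 2)).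
    pose proof (Rmin_r (Rmin (del / 4) (Rmin (x - a) (b - x) / 2)) (Rmin (y - c) (d - y) / 2)).
    pose proof (Rmin_l (del / 4) (Rmin (x - a) (b - x) / 2)); pose proof (Rmin_r (del / 4) (Rmin (x - a) (b - x) / 2)).
    pose proof (Rmin_l (x - a) (b - x)); pose proof (Rmin_r (x - a) (b - x)).
    pose proof (Rmin_l (y - c) (d - y)); pose proof (Rmin_r (y - c) (d - y)).
    match goal with |- 0 < ?s /\ _ =>
      assert (0 < s) by (repeat first [apply Rmin_glb_lt | apply Rdiv_lt_0_compat]; lra) end.
    repeat split; lra. }
  destruct Hsg as (Hsg0 & Hsgdel & Hsga & Hsgb & Hsgc & Hsgd).
  rewrite (rect_int_div_sub_shrink sg) by lra.
  replace eps with (16 * (eps / 16)) by field.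
  apply Cmod_le_rect_int_div_sub_square; try lra.
  intros w Hwx Hwy; left; apply HFdel.
  eapply Rle_lt_trans; [apply Cmod_sub_le_Rabs_fst_snd | simpl; lra].
Qed.

End CauchyEstimate.

(** * Bounding Phi on the right half-plane *)

Lemma exp_le_compat u v : u <= v -> exp u <= exp v.
Proof. intros [H | ->]; [left; apply exp_increasing, H | right; reflexivity]. Qed.

Lemma continuous_exp_abs (k t0 : R) : continuous (fun t => exp (k * Rabs t)) t0.
Proof.
  apply continuous_exp_comp, (continuous_mult (K := R_AbsRing) (fun _ => k) Rabs);
    [apply continuous_const | apply continuous_Rabs].
Qed.

Lemma is_lim_0_eventually_lt_1 (f : R -> R) (l : Rbar) :
  is_lim f l 0 -> Rbar_locally' l (fun v => Rabs (f v) < 1).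
Proof.
  intros Hf; apply (Hf (fun r => Rabs r < 1)); exists (mkposreal 1 Rlt_0_1); intros r Hr.
  change (Rabs (r - 0) < 1) in Hr; rewrite Rminus_0_r in Hr; exact Hr.
Qed.

Lemma RInt_le_of_is_RInt_gen (h : R -> R) l A B : A <= B -> (forall t, 0 <= h t) -> (forall a b, ex_RInt h a b) ->
  is_RInt_gen h (Rbar_locally m_infty) (Rbar_locally p_infty) l -> RInt h A B <= l.
Proof.
  intros HAB Hpos Hex Hl; apply Rnot_lt_le; intros Hlt.
  set (I := RInt h A B) in *; assert (Hgap : 0 < I - l) by lra.
  destruct (Hl (fun v => Rabs (v - l) < I - l)) as [Q1 Q2 [M1 HQ1] [M2 HQ2] Hclose].
  { exists (mkposreal _ Hgap); intros v Hv; exact Hv. }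
  set (a := Rmin A M1 - 1); set (b := Rmax B M2 + 1).
  pose proof (Rmin_l A M1); pose proof (Rmin_r A M1); pose proof (Rmax_l B M2); pose proof (Rmax_r B M2).
  destruct (Hclose a b) as [v [Hv Hvl]]; [apply HQ1; unfold a; lra | apply HQ2; unfold b; lra |].
  simpl in Hv; apply (is_RInt_unique (V := R_CompleteNormedModule)) in Hv.
  rewrite <- (RInt_Chasles (V := R_CompleteNormedModule) h a A b),
    <- (RInt_Chasles (V := R_CompleteNormedModule) h A B b) in Hv by auto.
  assert (Ha : a <= A) by (unfold a; lra); assert (Hb : B <= b) by (unfold b; lra).
  assert (0 <= RInt h a A) by (apply RInt_ge_0; auto).
  assert (0 <= RInt h B b) by (apply RInt_ge_0; auto).
  unfold plus in Hv; simpl in Hv; fold I in Hv; apply Rabs_lt_between in Hvl; lra.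
Qed.

(* Where e^{-(v - y)^2} turns into the weight e^{-pi |v|} of condition (b). *)
Lemma neg_sqr_sub_le_pi_abs t y : - ((t - y) * (t - y)) <= PI * PI / 4 + PI * Rabs y - PI * Rabs t.
Proof.
  pose proof PI_RGT_0.
  assert (Rabs t <= Rabs y + Rabs (t - y)) by (replace t with (y + (t - y)) at 1 by ring; apply Rabs_triang).
  assert ((t - y) * (t - y) = Rabs (t - y) * Rabs (t - y)) by (rewrite <- Rabs_mult, Rabs_right; [reflexivity | apply Rle_ge, Rle_0_sqr]).
  assert (0 <= (Rabs (t - y) - PI / 2) * (Rabs (t - y) - PI / 2)) by apply Rle_0_sqr.
  nra.
Qed.

Definition gauss_at (z w : C) : C := Cexp ((w - z) * (w - z))%C.

Lemma Cmod_gauss_at z w :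
  Cmod (gauss_at z w) = exp ((fst w - fst z) * (fst w - fst z) - (snd w - snd z) * (snd w - snd z)).
Proof. unfold gauss_at; rewrite Cmod_Cexp; destruct w, z; simpl; f_equal; ring. Qed.

Lemma ex_derive_C_gauss_at z w : ex_derive_C (gauss_at z) w.
Proof.
  apply (ex_derive_C_Cexp (fun u => (u - z) * (u - z))%C).
  apply ex_derive_C_mult; apply ex_derive_C_minus; first [apply ex_derive_C_id | apply ex_derive_C_const].
Qed.

Lemma exp_sqr_sub_div_mul_le s Y T : PI <= T ->
  exp (s * s - T * T) / T * exp (Y + PI * T) <= exp (s * s) * exp Y.
Proof.
  intros HT; pose proof PI2_3_2.
  unfold Rdiv; rewrite Rmult_comm, <- Rmult_assoc, <- !exp_plus.
  apply Rle_trans with (exp (s * s + Y) * 1).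
  - apply Rmult_le_compat; [left; apply exp_pos | left; apply Rinv_0_lt_compat; lra | apply exp_le_compat; nra |].
    rewrite <- Rinv_1; apply Rinv_le_contravar; lra.
  - rewrite exp_plus; lra.
Qed.

Section RightHalfPlane.

Variable Phi : C -> C.
Hypothesis Phi_analytic : analytic_right_half_plane Phi.
Variables x y s : R.
Hypotheses (Hs : 0 < s) (Hxs : 2 * s <= x).

Let z : C := (x, y).
Let F (w : C) : C := (Phi w / w * gauss_at z w)%C.

Lemma ex_derive_C_Phi_div w : 0 < fst w -> ex_derive_C (fun u => Phi u / u)%C w.
Proof.
  intros Hw; apply ex_derive_C_mult; [apply Phi_analytic, Hw|].
  apply (ex_derive_C_Cinv (fun u => u)); [apply ex_derive_C_id | intros E; rewrite E in Hw; simpl in Hw; lra].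
Qed.

Lemma ex_derive_C_F w : 0 < fst w -> ex_derive_C F w.
Proof. intros Hw; apply ex_derive_C_mult; [apply ex_derive_C_Phi_div, Hw | apply ex_derive_C_gauss_at]. Qed.

Lemma continuous_absratio_horizontal v t0 : 0 < t0 -> continuous (fun t => absratio Phi t v) t0.
Proof. intros Ht0; apply (Ccontinuous_at_horizontal (fun u => Phi u / u)%C v t0), ex_derive_C_Ccontinuous_at, ex_derive_C_Phi_div, Ht0. Qed.

Lemma continuous_absratio_vertical u t0 : 0 < u -> continuous (fun t => absratio Phi u t) t0.
Proof. intros Hu; apply (Ccontinuous_at_vertical (fun w => Phi w / w)%C u t0), ex_derive_C_Ccontinuous_at, ex_derive_C_Phi_div, Hu. Qed.

Lemma Cmod_F_div_sub (p q : R) : ((p, q) - z)%C <> 0%C ->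
  Cmod (F (p, q) * / ((p, q) - z)) = absratio Phi p q * exp ((p - x) * (p - x) - (q - y) * (q - y)) * / Cmod ((p, q) - z).
Proof. intros Hnz; unfold F; rewrite !Cmod_mult, Cmod_gauss_at, Cmod_inv by exact Hnz; reflexivity. Qed.

Lemma Cmod_F_div_sub_horizontal_le t v T : 0 < T -> Rabs (v - y) = T -> x - s <= t <= x + s ->
  Cmod (F (t, v) * / ((t, v) - z)) <= exp (s * s - T * T) / T * absratio Phi t v.
Proof.
  intros HT Hv Ht.
  assert (Hnz : ((t, v) - z)%C <> 0%C)
    by (apply Csub_neq_0; right; simpl; intros E; rewrite E, Rminus_diag, Rabs_R0 in Hv; lra).
  rewrite Cmod_F_div_sub by exact Hnz.
  assert (Hdist : T <= Cmod ((t, v) - z)) by (rewrite <- Hv; apply (Rabs_snd_le_Cmod ((t, v) - z))).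
  assert (Hexp : exp ((t - x) * (t - x) - (v - y) * (v - y)) <= exp (s * s - T * T)).
  { apply exp_le_compat.
    assert ((v - y) * (v - y) = T * T) by (rewrite <- Hv, <- Rabs_mult, Rabs_right; [reflexivity | apply Rle_ge, Rle_0_sqr]).
    assert ((t - x) * (t - x) <= s * s) by nra.
    lra. }
  apply Rle_trans with (absratio Phi t v * exp (s * s - T * T) * / T).
  - apply Rmult_le_compat.
    + apply Rmult_le_pos; [apply Cmod_ge_0 | left; apply exp_pos].
    + left; apply Rinv_0_lt_compat; lra.
    + apply Rmult_le_compat_l; [apply Cmod_ge_0 | exact Hexp].
    + apply Rinv_le_contravar; lra.
  - right; unfold Rdiv; ring.
Qed.

(* On a horizontal side at distance T >= pi from z, the Gaussian factor e^{s^2 - T^2} beats the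
   growth e^{pi |v|} allowed by condition (a). *)
Lemma Cmod_CInt_horizontal_side_le v T : PI <= T -> Rabs (v - y) = T ->
  exp (- PI * Rabs v) * RInt (fun t => absratio Phi t v) (x - s) (x + s) < 1 ->
  Cmod (CInt (fun t => F (t, v) * / ((t, v) - z))%C (x - s) (x + s)) <= 2 * (exp (s * s) * exp (PI * Rabs y)).
Proof.
  intros HT Hv Hsmall; pose proof PI2_3_2.
  set (coef := exp (s * s - T * T) / T).
  assert (Hcoef : 0 < coef) by (apply Rdiv_lt_0_compat; [apply exp_pos | lra]).
  assert (Hex : ex_RInt (fun t => absratio Phi t v) (x - s) (x + s)).
  { apply (ex_RInt_continuous (V := R_CompleteNormedModule)); intros t Ht.
    rewrite Rmin_left in Ht by lra; apply continuous_absratio_horizontal; lra. }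
  eapply Rle_trans; [apply (Cmod_CInt_le _ (fun t => coef * absratio Phi t v)); try lra|].
  - apply (ex_CInt_horizontal (fun w => F w * / (w - z))%C); [lra|]; intros t Ht.
    apply ex_derive_C_Ccontinuous_at, ex_derive_C_mult; [apply ex_derive_C_F; simpl; lra|].
    apply ex_derive_C_inv_sub; intros E; injection E; intros; subst v; rewrite Rminus_diag, Rabs_R0 in Hv; lra.
  - exact (ex_RInt_scal _ _ _ coef Hex).
  - intros t Ht; apply Cmod_F_div_sub_horizontal_le; lra.
  - rewrite (RInt_scal (V := R_CompleteNormedModule)) by exact Hex.
    assert (Hint : RInt (fun t => absratio Phi t v) (x - s) (x + s) < exp (PI * Rabs v)).
    { apply Rmult_lt_reg_l with (exp (- PI * Rabs v)); [apply exp_pos|].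
      rewrite <- exp_plus; replace (- PI * Rabs v + PI * Rabs v) with 0 by ring; rewrite exp_0; lra. }
    assert (Hv' : exp (PI * Rabs v) <= exp (PI * Rabs y + PI * T)).
    { apply exp_le_compat; rewrite <- Hv.
      assert (Rabs v <= Rabs y + Rabs (v - y)) by (replace v with (y + (v - y)) at 1 by ring; apply Rabs_triang).
      pose proof PI_RGT_0; nra. }
    pose proof (exp_sqr_sub_div_mul_le s (PI * Rabs y) T HT) as Hgauss; fold coef in Hgauss.
    unfold scal; simpl; unfold mult; simpl; nra.
Qed.

Let Cv := exp (s * s) * exp (PI * PI / 4) / s.

Lemma Cv_pos : 0 < Cv.
Proof. apply Rdiv_lt_0_compat; [apply Rmult_lt_0_compat; apply exp_pos | exact Hs]. Qed.

Lemma Cmod_F_div_sub_vertical_le u t : Rabs (u - x) = s ->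
  Cmod (F (u, t) * / ((u, t) - z)) <= Cv * exp (PI * Rabs y) * (absratio Phi u t * exp (- PI * Rabs t)).
Proof.
  intros Hu.
  assert (Hnz : ((u, t) - z)%C <> 0%C)
    by (apply Csub_neq_0; left; simpl; intros E; rewrite E, Rminus_diag, Rabs_R0 in Hu; lra).
  rewrite Cmod_F_div_sub by exact Hnz.
  assert (Hdist : s <= Cmod ((u, t) - z)) by (rewrite <- Hu; apply (Rabs_fst_le_Cmod ((u, t) - z))).
  assert (Hexp : exp ((u - x) * (u - x) - (t - y) * (t - y)) <=
                 exp (s * s) * exp (PI * PI / 4) * exp (PI * Rabs y) * exp (- PI * Rabs t)).
  { rewrite <- !exp_plus; apply exp_le_compat.
    assert ((u - x) * (u - x) = s * s) by (rewrite <- Hu, <- Rabs_mult, Rabs_right; [reflexivity | apply Rle_ge, Rle_0_sqr]).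
    pose proof (neg_sqr_sub_le_pi_abs t y); lra. }
  apply Rle_trans with
    (absratio Phi u t * (exp (s * s) * exp (PI * PI / 4) * exp (PI * Rabs y) * exp (- PI * Rabs t)) * / s).
  - apply Rmult_le_compat.
    + apply Rmult_le_pos; [apply Cmod_ge_0 | left; apply exp_pos].
    + left; apply Rinv_0_lt_compat; lra.
    + apply Rmult_le_compat_l; [apply Cmod_ge_0 | exact Hexp].
    + apply Rinv_le_contravar; lra.
  - right; unfold Cv, Rdiv; ring.
Qed.

(* On a vertical side at distance s from z the integrand is dominated by that of condition (b). *)
Lemma Cmod_CInt_vertical_side_le u T l : Rabs (u - x) = s -> 0 < u -> 0 < T -> line_integral Phi u l ->
  Cmod (CInt (fun t => F (u, t) * / ((u, t) - z))%C (y - T) (y + T)) <= 2 * (Cv * exp (PI * Rabs y) * l).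
Proof.
  intros Hu Hu0 HT Hl.
  set (h := fun t => absratio Phi u t * exp (- PI * Rabs t)).
  assert (Hh : forall a b, ex_RInt h a b).
  { intros a b; apply (ex_RInt_continuous (V := R_CompleteNormedModule)); intros t _.
    apply (continuous_mult (K := R_AbsRing)); [apply continuous_absratio_vertical, Hu0 | apply continuous_exp_abs]. }
  assert (HCv : 0 < Cv * exp (PI * Rabs y)) by (apply Rmult_lt_0_compat; [apply Cv_pos | apply exp_pos]).
  eapply Rle_trans; [apply (Cmod_CInt_le _ (fun t => Cv * exp (PI * Rabs y) * h t)); try lra|].
  - apply (ex_CInt_vertical (fun w => F w * / (w - z))%C); [lra|]; intros t Ht.
    apply ex_derive_C_Ccontinuous_at, ex_derive_C_mult; [apply ex_derive_C_F; simpl; lra|].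
    apply ex_derive_C_inv_sub; intros E; injection E; intros; subst u; rewrite Rminus_diag, Rabs_R0 in Hu; lra.
  - exact (ex_RInt_scal _ _ _ _ (Hh _ _)).
  - intros t Ht; apply Cmod_F_div_sub_vertical_le, Hu.
  - rewrite (RInt_scal (V := R_CompleteNormedModule)) by apply Hh.
    assert (RInt h (y - T) (y + T) <= l).
    { apply (RInt_le_of_is_RInt_gen h l); auto; [lra|].
      intros t; apply Rmult_le_pos; [apply Cmod_ge_0 | left; apply exp_pos]. }
    unfold scal; simpl; unfold mult; simpl; nra.
Qed.

Lemma Cmod_CInt_horizontal_sides_le : cond_a Phi -> exists T0, forall T, T0 <= T ->
  Cmod (CInt (fun t => F (t, (y - T)%R) * / ((t, (y - T)%R) - z))%C (x - s) (x + s))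
    <= 2 * (exp (s * s) * exp (PI * Rabs y)) /\
  Cmod (CInt (fun t => F (t, (y + T)%R) * / ((t, (y + T)%R) - z))%C (x - s) (x + s))
    <= 2 * (exp (s * s) * exp (PI * Rabs y)).
Proof.
  intros Ha; destruct (Ha (x - s) (x + s)) as [Hp Hm]; try lra.
  destruct (is_lim_0_eventually_lt_1 _ _ Hp) as [Y1 HY1].
  destruct (is_lim_0_eventually_lt_1 _ _ Hm) as [Y2 HY2].
  exists (Rabs Y1 + Rabs Y2 + Rabs y + PI + 1); intros T HT.
  pose proof PI_RGT_0; pose proof (Rabs_pos Y1); pose proof (Rabs_pos Y2); pose proof (Rabs_pos y).
  pose proof (Rle_abs Y1); pose proof (Rle_abs (- Y2)); pose proof (Rle_abs y); pose proof (Rle_abs (- y)).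
  rewrite !Rabs_Ropp in *.
  split; apply (Cmod_CInt_horizontal_side_le _ T); try lra.
  - replace (y - T - y) with (- T) by ring; rewrite Rabs_Ropp, Rabs_right; lra.
  - eapply Rle_lt_trans; [apply Rle_abs | apply HY2; lra].
  - replace (y + T - y) with T by ring; rewrite Rabs_right; lra.
  - eapply Rle_lt_trans; [apply Rle_abs | apply HY1; lra].
Qed.

Lemma Cmod_Phi_div_le M : (forall u, s <= u -> exists l, line_integral Phi u l /\ l <= M) -> cond_a Phi ->
  Cmod (Phi z / z) <= (Cv * Rabs M + exp (s * s)) * exp (PI * Rabs y).
Proof.
  intros HM Ha; pose proof Cv_pos.
  destruct (Cmod_CInt_horizontal_sides_le Ha) as [T0 HT0].
  set (T := Rabs T0 + s + 1); pose proof (Rle_abs T0); pose proof (Rabs_pos T0).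
  destruct (HT0 T ltac:(unfold T; lra)) as [Bbot Btop].
  destruct (HM (x + s)) as [l1 [Hl1 Hl1M]]; [lra|].
  destruct (HM (x - s)) as [l2 [Hl2 Hl2M]]; [lra|].
  assert (Bright := Cmod_CInt_vertical_side_le (x + s) T l1
    ltac:(replace (x + s - x) with s by ring; rewrite Rabs_right; lra) ltac:(lra) ltac:(unfold T; lra) Hl1).
  assert (Bleft := Cmod_CInt_vertical_side_le (x - s) T l2
    ltac:(replace (x - s - x) with (- s) by ring; rewrite Rabs_Ropp, Rabs_right; lra) ltac:(lra) ltac:(unfold T; lra) Hl2).
  pose proof (Cmod_le_rect_int_div_sub F (x - s) (x + s) (y - T) (y + T) x y ltac:(lra) ltac:(unfold T; lra)
    (fun w Hw1 Hw2 => ex_derive_C_F w ltac:(lra))) as Hcauchy; fold z in Hcauchy.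
  pose proof (Cmod_rect_int_le_sides (fun w => F w * / (w - z))%C (x - s) (x + s) (y - T) (y + T)).
  assert (HFz : Cmod (F z) = Cmod (Phi z / z)).
  { unfold F; rewrite Cmod_mult, Cmod_gauss_at; unfold z; simpl.
    replace ((x - x) * (x - x) - (y - y) * (y - y)) with 0 by ring; rewrite exp_0; ring. }
  assert (HCv : 0 < Cv * exp (PI * Rabs y)) by (apply Rmult_lt_0_compat; [apply Cv_pos | apply exp_pos]).
  assert (Cv * exp (PI * Rabs y) * l1 <= Cv * exp (PI * Rabs y) * Rabs M)
    by (apply Rmult_le_compat_l; [lra | pose proof (Rle_abs M); lra]).
  assert (Cv * exp (PI * Rabs y) * l2 <= Cv * exp (PI * Rabs y) * Rabs M)
    by (apply Rmult_le_compat_l; [lra | pose proof (Rle_abs M); lra]).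
  lra.
Qed.

End RightHalfPlane.

Theorem lemma3p1 (Phi : C -> C)
  (Han : analytic_right_half_plane Phi)
  (Ha : cond_a Phi) (Hb : cond_b Phi) (Hc : cond_c Phi)
  (delta : R) (Hdelta : 0 < delta) :
  exists c : R, 0 < c /\
    forall z : C, delta <= Re z ->
      Cmod (Phi z) <= c * Cmod z * exp (PI * Rabs (Im z)).
Proof.
  set (s := delta / 2); assert (Hs : 0 < s) by (unfold s; lra).
  destruct (Hb s Hs) as [M HM].
  set (K := exp (s * s) * exp (PI * PI / 4) / s * Rabs M + exp (s * s)).
  assert (HK : 0 <= K).
  { unfold K; pose proof (exp_pos (s * s)); pose proof (exp_pos (PI * PI / 4)); pose proof (Rabs_pos M).
    assert (0 <= exp (s * s) * exp (PI * PI / 4) / s) by (left; apply Rdiv_lt_0_compat; [nra | lra]); nra. }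
  exists (K + 1); split; [lra|].
  intros [x y] Hx; simpl in Hx |- *.
  pose proof (Cmod_Phi_div_le Phi Han x y s Hs ltac:(unfold s; lra) M HM Ha) as Hratio; fold K in Hratio.
  assert (Hnz : (x, y) <> RtoC 0) by (intros E; injection E; intros; lra).
  replace (Phi (x, y)) with (Phi (x, y) / (x, y) * (x, y))%C by (field; exact Hnz).
  rewrite Cmod_mult.
  pose proof (Cmod_ge_0 (x, y)); pose proof (exp_pos (PI * Rabs y)).
  pose proof (Cmod_ge_0 (Phi (x, y) / (x, y))%C).
  apply Rle_trans with (K * exp (PI * Rabs y) * Cmod (x, y)); [apply Rmult_le_compat_r; auto | nra].
Qed.
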